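(* Let $n\ge 7$ and let $D$ be a total dominating set of $G_{n,4}$. Then $|D\cap H_i^4|\ge 4$ for every $i$ with $1\le i\le n$. Moreover, if for some $i$ with $1\le i\le n$ we have $|N(v)\cap D|=1$ for every vertex $v\in H_i^4$, then $D\setminus (D\cap H_i^4)$ is a total dominating set of $G_i^4$.
   Context: $G_{n,m}=C_n\times C_m$ (Cartesian product of cycles) has vertex set $\{x_{ij}: 1\le i\le n,\ 1\le j\le m\}$, where $x_{ij}$ and $x_{i'j'}$ are adjacent iff either $i=i'$ and $j,j'$ are adjacent in the cycle $C_m$ on $\{1,\dots,m\}$, or $j=j'$ and $i,i'$ are adjacent in the cycle $C_n$ on $\{1,\dots,n\}$. $N(v)$ is the open neighbourhood of $v$. Let $Y_i=\{x_{ij}:1\le j\le m\}$ and $H_i^j=Y_i\cup Y_{i+1}\cup\cdots\cup Y_{i+j-1}$ (first indices modulo $n$). $G_i^j$ is the graph obtained from $G_{n,4}-H_i^j$ by adding the edges $x_{(i-1)k}x_{(i+j)k}$, $1\le k\le 4$ (indices modulo $n$); thus $G_i^4\cong G_{n-4,4}$. A set $D$ is a total dominating set of a graph $G$ if every vertex of $G$ has a neighbour (in $G$) in $D$. *)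

From mathcomp Require Import all_boot.
Set Implicit Arguments. Unset Strict Implicit. Unset Printing Implicit Defensive.

(* Indices are 0-based: row index i : 'I_n stands for the paper's i+1,
   column index k : 'I_m for the paper's k+1. *)

Definition cadj (n : nat) (i j : 'I_n) : bool :=
  (j == i.+1 %% n :> nat) || (i == j.+1 %% n :> nat).

Definition gadj (n m : nat) (u v : 'I_n * 'I_m) : bool :=
  ((u.1 == v.1) && cadj u.2 v.2) || ((u.2 == v.2) && cadj u.1 v.1).

(* H_i^j = Y_i u Y_{i+1} u ... u Y_{i+j-1}, first indices mod n *)
Definition Hset (m n : nat) (i : 'I_n) (j : nat) : {set 'I_n * 'I_m} :=
  [set u : 'I_n * 'I_m | (u.1 + n - i) %% n < j].

(* G_i^4: vertex set ~: H_i^4, edges of G_{n,4} between remaining vertices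
   plus the edges x_{(i-1)k} x_{(i+4)k} *)
Definition Gi4adj (n : nat) (i : 'I_n) (u v : 'I_n * 'I_4) : bool :=
  [&& u \notin Hset 4 i 4, v \notin Hset 4 i 4 &
     gadj u v ||
     ((u.2 == v.2) &&
      (((u.1 == (i + n - 1) %% n :> nat) && (v.1 == (i + 4) %% n :> nat)) ||
       ((v.1 == (i + n - 1) %% n :> nat) && (u.1 == (i + 4) %% n :> nat))))].

Definition total_dom (T : finType) (V : {set T}) (e : rel T) (D : {set T}) : Prop :=
  D \subset V /\ (forall v, v \in V -> exists2 u, u \in D & e v u).

From mathcomp Require Import all_boot zmodp zify.
Set Implicit Arguments. Unset Strict Implicit. Unset Printing Implicit Defensive.

(* Since n >= 7, the six rows i-1, ..., i+4 of G_{n,4} induce a copy of the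
   grid P_6 x C_4 in which H_i^4 is the set of the four inner rows, and every
   neighbour of an inner vertex stays in the window; both claims are therefore
   statements about this grid.
   For the bound, the grid is bipartite, and the four vertices of one colour in
   the two middle rows can only be dominated by vertices of the other colour
   lying in H_i^4.  No single vertex dominates all four of them, because a
   vertex has at most one neighbour in any row other than its own; hence each
   colour class of H_i^4 contains two vertices of D.
   For the second claim, unique domination propagates along the window: if
   x_{i,k} is in D, unique domination of x_{i+1,k} and x_{i,k+1} leaves
   x_{i+2,k+2} as the only possible dominator of x_{i+1,k+2}, and unique
   domination of x_{i+2,k-1}, x_{i+2,k+1} then leaves x_{i+4,k} as the only
   possible dominator of x_{i+3,k}; the other direction follows by reflecting
   the grid.  So a vertex of row i-1 or i+4 dominated from H_i^4 is also
   dominated through one of the new edges of G_i^4. *)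

Lemma cadjE n (a b : 'I_n) : cadj a b = (b == ordS a) || (a == ordS b).
Proof. by []. Qed.

Lemma cadj_sym n (a b : 'I_n) : cadj a b = cadj b a.
Proof. by rewrite /cadj orbC. Qed.

Lemma cadj_ordS n (a b : 'I_n) : cadj (ordS a) (ordS b) = cadj a b.
Proof. by rewrite !cadjE !(inj_eq (@ordS_inj n)). Qed.

Lemma cadj_iter_ordS n c (a b : 'I_n) :
  cadj (iter c (@ordS n) a) (iter c (@ordS n) b) = cadj a b.
Proof. by elim: c => //= c IHc; rewrite cadj_ordS. Qed.

Lemma val_iter_ordS n (a : 'I_n) k : iter k (@ordS n) a = (a + k) %% n :> nat.
Proof.
elim: k => [|k IHk]; first by rewrite addn0 modn_small.
by rewrite iterS /= IHk addnS -addn1 modnDml addn1.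
Qed.

Lemma iter_ordS_inj n c : injective (iter c (@ordS n)).
Proof. by elim: c => [|c IHc] a b //= /ordS_inj /IHc. Qed.

Lemma odd_ordS n (a : 'I_n) : ~~ odd n -> odd (ordS a) = ~~ odd a.
Proof. by move=> /negbTE n_even; rewrite /= odd_mod. Qed.

Lemma gadj_sym n m (u v : 'I_n * 'I_m) : gadj u v = gadj v u.
Proof.
by rewrite /gadj cadj_sym [cadj u.1 _]cadj_sym [u.1 == _]eq_sym [u.2 == _]eq_sym.
Qed.

Definition uniquely_dominated (T : finType) (e : rel T) (A : pred T) (d : {set T}) :=
  forall x, A x -> #|[set u in d | e x u]| = 1.

Lemma unique_nbr_excl (T : finType) (e : rel T) (d : {set T}) x y z :
  #|[set u in d | e x u]| = 1 -> y \in d -> e x y -> e x z -> z != y -> z \notin d.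
Proof.
move=> /eqP/cards1P[w Nx] dy xy xz; apply: contra => dz.
have: y \in [set w] by rewrite -Nx inE dy.
have: z \in [set w] by rewrite -Nx inE dz.
by rewrite !inE => /eqP-> /eqP->.
Qed.

Lemma unique_nbr_forced (T : finType) (e : rel T) (d : {set T}) x w (s : seq T) :
  #|[set u in d | e x u]| = 1 -> (forall y, e x y -> y \in w :: s) ->
  all (fun y => y \notin d) s -> w \in d.
Proof.
move=> /eqP/cards1P[y Nx] nbrs /allP s_d.
have: y \in [set u in d | e x u] by rewrite Nx set11.
rewrite inE => /andP[dy /nbrs]; rewrite inE => /orP[/eqP <- //|ys].
by rewrite (negbTE (s_d y ys)) in dy.
Qed.

Lemma uniquely_dominated_preimset (T : finType) (e : rel T) (A : pred T)
    (d : {set T}) (f : T -> T) :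
  injective f -> (forall x y, e (f x) (f y) = e x y) -> (forall x, A (f x) = A x) ->
  uniquely_dominated e A d -> uniquely_dominated e A (f @^-1: d).
Proof.
move=> f_inj f_e f_A ud x Ax.
have -> : [set u in f @^-1: d | e x u] = f @^-1: [set u in d | e (f x) u].
  by apply/setP => u; rewrite !inE f_e.
by rewrite card_preimset // ud // f_A.
Qed.

(** * The grid P_6 x C_4 *)

Definition padj k (a b : 'I_k) : bool := (b == a.+1 :> nat) || (a == b.+1 :> nat).

Lemma padj_rev k (a b : 'I_k) : padj (rev_ord a) (rev_ord b) = padj a b.
Proof. by rewrite /padj /=; have := ltn_ord a; have := ltn_ord b; lia. Qed.

Definition grid := ('I_6 * 'I_4)%type.

Definition gridadj (x y : grid) : bool :=
  ((x.1 == y.1) && cadj x.2 y.2) || ((x.2 == y.2) && padj x.1 y.1).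

Definition inner (x : grid) : bool := 0 < x.1 < 5.
Definition middle (x : grid) : bool := 1 < x.1 < 4.
Definition colour (x : grid) : bool := odd (x.1 + x.2).

(* Unlike [inord], [inZp] reduces on numerals, so facts about concrete points
   are decided by computation. *)
Definition pt (j k : nat) : grid := (inZp j, inZp k).

Lemma gridadj_sym (x y : grid) : gridadj x y = gridadj y x.
Proof.
by rewrite /gridadj cadj_sym /padj [(_ == _.+1) || _]orbC [x.1 == _]eq_sym [x.2 == _]eq_sym.
Qed.

Lemma middle_inner x : middle x -> inner x.
Proof. by rewrite /middle /inner; lia. Qed.

Lemma middle_nbr_inner x y : middle x -> gridadj x y -> inner y.
Proof.
rewrite /middle /inner /gridadj /padj => mx.
by case/orP => /andP[/eqP e] => [_|/orP[]/eqP]; rewrite -?e; lia.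
Qed.

Lemma gridadj_colour (x y : grid) : gridadj x y -> colour y = ~~ colour x.
Proof.
rewrite /gridadj /colour /padj cadjE.
case/orP => /andP[/eqP e /orP[] /eqP e']; rewrite -?e ?e'.
- by rewrite !oddD odd_ordS // addbN.
- by rewrite !oddD odd_ordS // addbN negbK.
- by rewrite addSn.
- by rewrite addSn negbK.
Qed.

Lemma gridadj_off_row w x y :
  gridadj w x -> gridadj w y -> x.1 = y.1 -> x.1 != w.1 -> x = y.
Proof.
have col_w z : gridadj w z -> z.1 != w.1 -> z.2 = w.2.
  by case/orP => /andP[/eqP ->] //; rewrite eqxx.
move=> wx wy exy xw; rewrite [x]surjective_pairing [y]surjective_pairing.
by rewrite exy (col_w x wx xw) (col_w y wy) // -exy.
Qed.

(* Each colour class has two middle vertices in row 2 and two in row 3, and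
   [w] cannot be adjacent to both vertices of a row other than its own. *)
Lemma middle_colour_class_no_common_nbr q w :
  exists2 x, middle x && (colour x == q) & ~~ gridadj w x.
Proof.
suff pair x y : middle x && (colour x == q) -> middle y && (colour y == q) ->
    x.1 = y.1 -> x.1 != w.1 -> x != y ->
    exists2 z, middle z && (colour z == q) & ~~ gridadj w z.
  have [w2|w2] := eqVneq (w.1 : nat) 2; case: q pair => pair.
  - by apply: (pair (pt 3 0) (pt 3 2)); rewrite // -val_eqE /= w2.
  - by apply: (pair (pt 3 1) (pt 3 3)); rewrite // -val_eqE /= w2.
  - by apply: (pair (pt 2 1) (pt 2 3)); rewrite // -val_eqE /= eq_sym.
  - by apply: (pair (pt 2 0) (pt 2 2)); rewrite // -val_eqE /= eq_sym.
move=> qx qy exy xw; case wx: (gridadj w x); last by exists x; rewrite ?wx.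
case wy: (gridadj w y); last by exists y; rewrite ?wy.
by rewrite (gridadj_off_row wx wy exy xw) eqxx.
Qed.

Lemma two_dominators_per_colour (d : {set grid}) p :
  (forall x, middle x -> exists2 y, y \in d & gridadj x y) ->
  2 <= #|[set y in d | inner y && (colour y == p)]|.
Proof.
move=> dom; set S := [set y in d | inner y && (colour y == p)].
have domS x : middle x && (colour x == ~~ p) -> exists2 y, y \in S & gridadj y x.
  case/andP=> mx /eqP cx; have [y dy xy] := dom x mx.
  exists y; last by rewrite gridadj_sym.
  by rewrite inE dy (middle_nbr_inner mx xy) (gridadj_colour xy) cx negbK eqxx.
rewrite ltnNge; apply/negP => /card_le1_eqP S1.
have [x1 cx1 _] := middle_colour_class_no_common_nbr (~~ p) (pt 0 0).
have [w Sw _] := domS x1 cx1.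
have [x cx wx] := middle_colour_class_no_common_nbr (~~ p) w.
have [y Sy yx] := domS x cx.
by rewrite (S1 _ _ Sy Sw) yx in wx.
Qed.

Lemma inner_dominators_card (d : {set grid}) :
  (forall x, middle x -> exists2 y, y \in d & gridadj x y) ->
  4 <= #|[set y in d | inner y]|.
Proof.
move=> dom; rewrite -(cardsID [set y | colour y]).
have -> : [set y in d | inner y] :&: [set y | colour y] =
          [set y in d | inner y && (colour y == true)].
  by apply/setP => y; rewrite !inE eqb_id andbA.
have -> : [set y in d | inner y] :\: [set y | colour y] =
          [set y in d | inner y && (colour y == false)].
  by apply/setP => y; rewrite !inE; case: colour; rewrite ?andbT ?andbF.
exact: leq_add (two_dominators_per_colour _ dom) (two_dominators_per_colour _ dom).
Qed.

Definition grid_sym (b : bool) (c : nat) (x : grid) : grid :=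
  (if b then rev_ord x.1 else x.1, iter c (@ordS 4) x.2).

Definition mirror (x : grid) : grid := (rev_ord x.1, x.2).

Lemma grid_sym_inj b c : injective (grid_sym b c).
Proof.
move=> [x1 x2] [y1 y2] /= [e1 /iter_ordS_inj ->].
by case: b e1 => [/rev_ord_inj|] ->.
Qed.

Lemma grid_sym_gridadj b c x y : gridadj (grid_sym b c x) (grid_sym b c y) = gridadj x y.
Proof.
rewrite /gridadj /= cadj_iter_ordS (inj_eq (@iter_ordS_inj 4 c)).
by case: b; rewrite ?padj_rev ?(inj_eq rev_ord_inj).
Qed.

Lemma grid_sym_inner b c x : inner (grid_sym b c x) = inner x.
Proof. by case: b; rewrite /inner //=; have := ltn_ord x.1; lia. Qed.

Lemma inner_mirror z : inner (mirror z) = inner z.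
Proof. exact: (grid_sym_inner true 0). Qed.

Lemma uniquely_dominated_up d :
  uniquely_dominated gridadj inner d -> pt 1 0 \in d -> pt 5 0 \in d.
Proof.
move=> ud d10.
have excl x y z : inner x -> y \in d -> gridadj x y -> gridadj x z -> z != y -> z \notin d.
  by move=> /ud; apply: unique_nbr_excl.
have [d21 d23 d30] : [/\ pt 2 1 \notin d, pt 2 3 \notin d & pt 3 0 \notin d].
  by split; apply: (excl (pt 2 0) (pt 1 0)).
have d12 : pt 1 2 \notin d by apply: (excl (pt 1 1) (pt 1 0)).
have d32 : pt 3 2 \in d.
  apply: (unique_nbr_forced (ud (pt 2 2) isT) (s := [:: pt 1 2; pt 2 1; pt 2 3])) => /=.
    by case=> [[[|[|[|[|[|[|//]]]]]] ?] [[|[|[|[|//]]]] ?]].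
  by rewrite d12 d21 d23.
have [d41 d43] : pt 4 1 \notin d /\ pt 4 3 \notin d.
  by split; [apply: (excl (pt 3 1) (pt 3 2)) | apply: (excl (pt 3 3) (pt 3 2))].
apply: (unique_nbr_forced (ud (pt 4 0) isT) (s := [:: pt 3 0; pt 4 1; pt 4 3])) => /=.
  by case=> [[[|[|[|[|[|[|//]]]]]] ?] [[|[|[|[|//]]]] ?]].
by rewrite d30 d41 d43.
Qed.

Lemma boundary_edge_sym y z : inner y -> ~~ inner z -> gridadj y z ->
  exists b c, grid_sym b c (pt 1 0) = y /\ grid_sym b c (pt 5 0) = mirror z.
Proof.
move=> iy iz; case/orP => /andP[/eqP e yz]; first by move: iy iz; rewrite /inner e => ->.
have col : iter z.2 (@ordS 4) (inZp 0) = z.2.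
  by apply/val_inj => /=; rewrite val_iter_ordS; exact: (@modn_small z.2 4).
exists (z.1 == 5 :> nat), z.2; rewrite /grid_sym /mirror col -e [y]surjective_pairing.
move: iy iz yz; rewrite /inner /padj => iy iz yz.
by split; congr (_, _); apply/val_inj; case: ifP => /= /eqP; lia.
Qed.

Lemma uniquely_dominated_boundary d y z :
  uniquely_dominated gridadj inner d -> inner y -> ~~ inner z -> gridadj y z ->
  y \in d -> mirror z \in d.
Proof.
move=> ud iy iz yz dy; have [b [c [sym1 sym5]]] := boundary_edge_sym iy iz yz.
have ud' := uniquely_dominated_preimset (@grid_sym_inj b c) (grid_sym_gridadj b c)
  (grid_sym_inner b c) ud.
by have := uniquely_dominated_up ud'; rewrite !inE sym1 sym5; apply.
Qed.

(** * The window of G_{n,4} around H_i^4 *)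

Section Window.

Variables (n : nat) (i : 'I_n).
Hypothesis n_ge7 : 7 <= n.

(* [row j] is row i-1+j (mod n); the rows 1..4 of the window form H_i^4. *)
Definition row (j : nat) : 'I_n :=
  Ordinal (ltn_pmod (i + n.-1 + j) (leq_ltn_trans (leq0n i) (ltn_ord i))).

Definition window (x : grid) : 'I_n * 'I_4 := (row x.1, x.2).

Lemma row_succ j : ordS (row j) = row j.+1.
Proof. by apply/val_inj; rewrite /= -addn1 modnDml addn1 addnS. Qed.

Lemma eq_row j k : j < n -> k < n -> (row j == row k) = (j == k).
Proof.
by move=> jn kn; rewrite -[_ == _]/(row j == row k :> nat) /= eqn_modDl !modn_small.
Qed.

Lemma grid_row_lt (j : 'I_6) : j.+1 < n.
Proof. by have := ltn_ord j; lia. Qed.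

Lemma eq_grid_row (a b : 'I_6) : (row a == row b) = (a == b).
Proof. by rewrite eq_row //; apply: ltnW; apply: grid_row_lt. Qed.

Lemma window_inj : injective window.
Proof.
move=> x y /eqP; rewrite /window xpair_eqE eq_grid_row => /andP[/eqP e1 /eqP e2].
by rewrite [x]surjective_pairing [y]surjective_pairing e1 e2.
Qed.

Lemma cadj_row (a b : 'I_6) : cadj (row a) (row b) = padj a b.
Proof.
have := ltn_ord a; have := ltn_ord b => b6 a6.
by rewrite cadjE !row_succ /padj !eq_row //; lia.
Qed.

Lemma gadj_window x y : gadj (window x) (window y) = gridadj x y.
Proof. by rewrite /gadj /gridadj /= cadj_row eq_grid_row. Qed.

Lemma window_in_Hset x : (window x \in Hset 4 i 4) = inner x.
Proof.
have := ltn_ord i => ilt.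
rewrite inE /inner /= -(addnBA _ (ltnW (ltn_ord i))) modnDml.
have -> : i + n.-1 + x.1 + (n - i) = n + (n.-1 + x.1) by lia.
rewrite modnDl; case: x => [[[|j] lt6] c] /=.
  by rewrite addn0 modn_small; lia.
have -> : n.-1 + j.+1 = n + j by lia.
by rewrite modnDl modn_small; lia.
Qed.

Lemma window_inZp k c : k < 6 -> window (inZp k, c) = (row k, c).
Proof. by move=> k6; rewrite /window /= modn_small. Qed.

Lemma Hset_window u : u \in Hset 4 i 4 -> exists2 x, inner x & u = window x.
Proof.
rewrite inE; set k := _ %% n => k4; have := ltn_ord i; have := ltn_ord u.1 => ult ilt.
exists (inZp k.+1, u.2); first by rewrite /inner /= modn_small; lia.
rewrite window_inZp; last by lia.
rewrite [u]surjective_pairing; congr (_, _); apply/val_inj => /=.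
have -> : i + n.-1 + k.+1 = n + (i + k) by lia.
rewrite modnDl modnDmr.
have -> : i + (u.1 + n - i) = u.1 + n by lia.
by rewrite modnDr modn_small.
Qed.

Lemma window_nbr x v : inner x -> gadj (window x) v -> exists y, v = window y.
Proof.
case: v => r c; rewrite /inner /gadj /= => ix; case/orP => /andP[/eqP e].
  by rewrite -e; exists (x.1, c).
rewrite -e cadjE row_succ => /orP[/eqP ->|/eqP].
  by exists (inZp x.1.+1, x.2); rewrite window_inZp //; lia.
rewrite -(prednK (_ : 0 < x.1)) -?row_succ => [/ordS_inj <-|]; last by lia.
by exists (inZp x.1.-1, x.2); rewrite window_inZp //; lia.
Qed.

Lemma nbhd_window (D : {set 'I_n * 'I_4}) x : inner x ->
  [set u in D | gadj (window x) u] =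
  window @: [set y in window @^-1: D | gridadj x y].
Proof.
move=> ix; apply/setP => u; apply/idP/idP.
  rewrite inE => /andP[Du xu]; have [y uy] := window_nbr ix xu.
  by rewrite uy (mem_imset _ _ window_inj) !inE -uy Du -gadj_window -uy.
by case/imsetP => y; rewrite !inE -gadj_window => /andP[? ?] ->; apply/andP.
Qed.

Lemma Gi4adj_window_mirror z :
  ~~ inner z -> Gi4adj i (window z) (window (mirror z)).
Proof.
move=> iz; rewrite /Gi4adj !window_in_Hset inner_mirror iz /= eqxx.
have ilt := ltn_ord i.
have row0 : i + n.-1 + 0 = i + n - 1 by lia.
have row5 : i + n.-1 + 5 = i + 4 + n by lia.
move: iz; rewrite /inner; case: z => [[[|[|[|[|[|[|//]]]]]] ?] c] //= _.
  by rewrite row0 row5 modnDr !eqxx /= orbT.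
by rewrite row0 row5 modnDr !eqxx /= !orbT.
Qed.

Lemma total_dom_card_Hset (D : {set 'I_n * 'I_4}) :
  total_dom [set: 'I_n * 'I_4] (@gadj n 4) D -> 4 <= #|D :&: Hset 4 i 4|.
Proof.
move=> [_ tds]; pose d := window @^-1: D.
have dom x : middle x -> exists2 y, y \in d & gridadj x y.
  move=> /middle_inner ix; have [u Du xu] := tds (window x) (in_setT _).
  have : u \in [set u in D | gadj (window x) u] by rewrite inE Du.
  by rewrite nbhd_window // => /imsetP[y]; rewrite inE => /andP[dy xy] _; exists y.
apply: leq_trans (inner_dominators_card dom) _.
rewrite -(card_imset _ window_inj); apply/subset_leq_card/subsetP => u /imsetP[y].
by rewrite inE => /andP[dy iy] ->; rewrite inE in dy; rewrite in_setI dy window_in_Hset.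
Qed.

Lemma uniquely_dominated_Hset_total_dom (D : {set 'I_n * 'I_4}) :
  total_dom [set: 'I_n * 'I_4] (@gadj n 4) D ->
  (forall v, v \in Hset 4 i 4 -> #|[set u in D | gadj v u]| = 1) ->
  total_dom (~: Hset 4 i 4) (Gi4adj i) (D :\: (D :&: Hset 4 i 4)).
Proof.
move=> [_ tds] exactH; pose d := window @^-1: D.
have ud : uniquely_dominated gridadj inner d.
  move=> x ix; rewrite -(card_imset _ window_inj) -nbhd_window //.
  by rewrite exactH // window_in_Hset.
split=> [|v].
  apply/subsetP => u; rewrite in_setD in_setI in_setC.
  by case: (u \in D); case: (u \in Hset 4 i 4).
rewrite inE => vH; have [u Du vu] := tds v (in_setT _).
have [uH|uH] := boolP (u \in Hset 4 i 4); last first.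
  by exists u; [rewrite in_setD in_setI Du (negbTE uH) | rewrite /Gi4adj vH uH vu].
have [y iy uy] := Hset_window uH; rewrite gadj_sym uy in vu.
have [z vz] := window_nbr iy vu; rewrite vz in vu vH *; rewrite window_in_Hset in vH.
exists (window (mirror z)); last exact: Gi4adj_window_mirror.
have : mirror z \in d.
  by apply: (uniquely_dominated_boundary ud iy vH); rewrite ?inE -?uy // -gadj_window.
by rewrite inE in_setD in_setI window_in_Hset inner_mirror (negbTE vH) => ->.
Qed.

End Window.

Theorem lemma4p3 (n : nat) (Hn : 7 <= n) (D : {set 'I_n * 'I_4}) :
  total_dom [set: 'I_n * 'I_4] (@gadj n 4) D ->
  (forall i : 'I_n, 4 <= #|D :&: Hset 4 i 4|) /\
  (forall i : 'I_n,
     (forall v, v \in Hset 4 i 4 -> #|[set u in D | gadj v u]| = 1) ->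
     total_dom (~: Hset 4 i 4) (Gi4adj i) (D :\: (D :&: Hset 4 i 4))).
Proof.
move=> tdD; split=> i; first exact: total_dom_card_Hset.
exact: uniquely_dominated_Hset_total_dom.
Qed.
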